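(* Let $\mathcal{AF}_{\vdash}=(\vdash,\overline{\cdot},\widehat{\cdot})$ be a pointed setting. Then $\mathcal{AF}_{\vdash}$ satisfies Cumulativity and Extensional Cumulativity for grounded semantics: for all $\mathcal{S}\cup\{\phi,\psi\}\subseteq\mathcal{L}$ with $\mathcal{S}\mathrel{\mid\!\sim}_{\mathsf{Grd}}\phi$, (i) $\mathcal{S}\mathrel{\mid\!\sim}^{+\phi}_{\mathsf{Grd}}\psi$ iff $\mathcal{S}\mathrel{\mid\!\sim}_{\mathsf{Grd}}\psi$, and (ii) $\mathsf{Grd}(\mathcal{AF}_{\vdash}(\mathcal{S}))=\mathsf{Grd}(\mathcal{AF}_{\vdash^{+\phi}}(\mathcal{S}))\cap\mathit{Arg}_{\vdash}(\mathcal{S})$.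
   Context: $\mathcal{L}$ is a set of formulas, $\wp_{\sf fin}(X)$ the finite subsets of $X$. A setting is $(\vdash,\overline{\cdot},\widehat{\cdot})$ with ${\vdash}\subseteq\wp_{\sf fin}(\mathcal{L})\times\mathcal{L}$ arbitrary, $\overline{\cdot}:\mathcal{L}\to\wp(\mathcal{L})$, $\widehat{\cdot}$ assigning to each nonempty finite set of formulas a finite set of formulas, with $\widehat{\emptyset}=\emptyset$. $\mathit{Arg}_{\vdash}(\mathcal{S})=\{(\Gamma,\gamma):\Gamma\subseteq\mathcal{S}\text{ finite},\Gamma\vdash\gamma\}$; in $\mathcal{AF}_{\vdash}(\mathcal{S})$, $(\Gamma,\gamma)$ attacks $(\Gamma',\gamma')$ iff $\gamma\in\overline{\phi}$ for some $\phi\in\widehat{\Gamma'}$. A set of arguments is complete iff it is conflict-free, defends each member (every attacker of a member is attacked by a member) and contains every argument it defends; $\mathsf{Grd}(\mathcal{AF}_{\vdash}(\mathcal{S}))$ is the $\subseteq$-minimal complete set. $\mathcal{S}\mathrel{\mid\!\sim}_{\mathsf{Grd}}\phi$ iff the grounded extension of $\mathcal{AF}_{\vdash}(\mathcal{S})$ contains an argument with conclusion $\phi$. For $\phi\in\mathcal{L}$, $\vdash^{+\phi}$ is the transitive closure of ${\vdash}\cup\{(\emptyset,\phi)\}$, and $\mathrel{\mid\!\sim}^{+\phi}_{\mathsf{Grd}}$ is the grounded consequence relation of the setting $(\vdash^{+\phi},\overline{\cdot},\widehat{\cdot})$. The setting is pointed iff (1) $\widehat{\Gamma\cup\Delta}=\widehat{\Gamma}\cup\widehat{\Delta}$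 for all finite $\Gamma,\Delta$, and (2) $\vdash$ satisfies Cut: for every $\phi\in\mathcal{L}$ and all finite $\Gamma,\Delta$ and $\gamma$, if $\Gamma\vdash\phi$ and $\Delta\vdash^{+\phi}\gamma$ then $\Gamma\cup\Delta\vdash\gamma$. *)

From mathcomp Require Import all_boot finmap.
From Stdlib Require Import ClassicalEpsilon.
Set Implicit Arguments. Unset Strict Implicit. Unset Printing Implicit Defensive.
Local Open Scope fset_scope.

Section Setting.
Variable L : choiceType.

Definition arg := ({fset L} * L)%type.

Definition Args (der : {fset L} -> L -> Prop) (S : L -> Prop) (a : arg) : Prop :=
  (forall x, x \in a.1 -> S x) /\ der a.1 a.2.

Definition attacks (bar : L -> L -> Prop) (hat : {fset L} -> {fset L})
  (a b : arg) : Prop := exists2 f, f \in hat b.1 & bar f a.2.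

Definition conflict_free (Att : arg -> arg -> Prop) (E : arg -> Prop) :=
  forall a b, E a -> E b -> ~ Att a b.

Definition defends (Ar : arg -> Prop) (Att : arg -> arg -> Prop)
  (E : arg -> Prop) (a : arg) :=
  forall b, Ar b -> Att b a -> exists2 c, E c & Att c b.

Definition complete (Ar : arg -> Prop) (Att : arg -> arg -> Prop) (E : arg -> Prop) :=
  [/\ (forall a, E a -> Ar a),
      conflict_free Att E,
      (forall a, E a -> defends Ar Att E a) &
      (forall a, Ar a -> defends Ar Att E a -> E a)].

Definition grounded (Ar : arg -> Prop) (Att : arg -> arg -> Prop) (E : arg -> Prop) :=
  complete Ar Att E /\
  forall E', complete Ar Att E' -> (forall a, E' a -> E a) -> forall a, E a -> E' a.

Definition Grd (Ar : arg -> Prop) (Att : arg -> arg -> Prop) : arg -> Prop :=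
  epsilon (inhabits (fun _ : arg => False)) (grounded Ar Att).

Definition grd_cons (der : {fset L} -> L -> Prop) (bar : L -> L -> Prop)
  (hat : {fset L} -> {fset L}) (S : L -> Prop) (phi : L) : Prop :=
  exists a, Grd (Args der S) (attacks bar hat) a /\ a.2 = phi.

(* |-^{+phi}: transitive (cut) closure of |- together with (emptyset, phi). *)
Inductive plus_der (der : {fset L} -> L -> Prop) (phi : L) : {fset L} -> L -> Prop :=
  | pd_base G g : der G g -> plus_der der phi G g
  | pd_phi : plus_der der phi fset0 phi
  | pd_cut G D psi g :
      plus_der der phi G psi -> plus_der der phi (psi |` D) g ->
      plus_der der phi (G `|` D) g.

Definition pointed (der : {fset L} -> L -> Prop) (hat : {fset L} -> {fset L}) : Prop :=
  (forall G D, hat (G `|` D) = hat G `|` hat D) /\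
  (forall phi G D g, der G phi -> plus_der der phi D g -> der (G `|` D) g).

End Setting.

From mathcomp Require Import all_boot finmap.
From Stdlib Require Import ClassicalEpsilon.
Local Open Scope fset_scope.

(* The grounded extension is the least set of arguments closed under adding
   the arguments it defends, so inclusions between grounded extensions are
   proved by induction.  Fix a0 in Grd(AF_|-(S)) concluding phi.  By Cut, a
   |-^{+phi}-argument b turns into the |--argument cut_arg a0 b with the same
   conclusion, and by additivity of hat its attackers are those of a0 or of b.
   Attacks on a0 are answered inside the grounded extension, which makes the
   two directions of the inductions go through. *)

Section GroundedExtension.
Context {L : choiceType} (Ar : arg L -> Prop) (Att : arg L -> arg L -> Prop).

Definition defense_closed (P : arg L -> Prop) :=
  forall a, Ar a -> defends Ar Att P a -> P a.

Definition grounded_lfp (a : arg L) := forall P, defense_closed P -> P a.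

Lemma defendsS (E E' : arg L -> Prop) a :
  (forall x, E x -> E' x) -> defends Ar Att E a -> defends Ar Att E' a.
Proof.
by move=> sEE' dEa b Arb Aba; have [c /sEE' E'c Acb] := dEa b Arb Aba; exists c.
Qed.

Lemma grounded_lfp_closed : defense_closed grounded_lfp.
Proof.
move=> a Ara da P closedP; apply: (closedP) => //.
by apply: defendsS da => x /(_ P closedP).
Qed.

Lemma grounded_lfp_args a : grounded_lfp a -> Ar a.
Proof. by apply. Qed.

Lemma grounded_lfp_defended a : grounded_lfp a -> defends Ar Att grounded_lfp a.
Proof.
move=> la; suff [] : grounded_lfp a /\ defends Ar Att grounded_lfp a by [].
apply: (la (fun x => grounded_lfp x /\ defends Ar Att grounded_lfp x)).
move=> x Arx dx.
have dlx : defends Ar Att grounded_lfp x by apply: defendsS dx => y [].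
by split; first exact: grounded_lfp_closed.
Qed.

(* If x attacked a member b, a defender d of b would attack x and in turn be
   attacked by a defender of x: so members attack no member, by induction. *)
Lemma grounded_lfp_conflict_free : conflict_free Att grounded_lfp.
Proof.
pose Q x := grounded_lfp x /\ forall b, grounded_lfp b -> ~ Att x b.
suff lQ a : grounded_lfp a -> Q a by move=> a b /lQ[_ nAa] /nAa.
apply; move=> x Arx dQx; split.
  by apply: grounded_lfp_closed => //; apply: defendsS dQx => y [].
move=> b lb Axb; have [d ld Adx] := grounded_lfp_defended _ lb x Arx Axb.
have [c [_ nAc] Acd] := dQx d (grounded_lfp_args _ ld) Adx.
exact: nAc d ld Acd.
Qed.

Lemma grounded_lfp_grounded : grounded Ar Att grounded_lfp.
Proof.
split; last by move=> E [_ _ _ closedE] _ a /(_ E closedE).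
split; [exact: grounded_lfp_args | exact: grounded_lfp_conflict_free
       | exact: grounded_lfp_defended | exact: grounded_lfp_closed].
Qed.

Lemma Grd_grounded : grounded Ar Att (Grd Ar Att).
Proof.
by apply: epsilon_spec; exists grounded_lfp; exact: grounded_lfp_grounded.
Qed.

Lemma Grd_complete : complete Ar Att (Grd Ar Att).
Proof. by case: Grd_grounded. Qed.

Lemma Grd_ind (P : arg L -> Prop) :
  defense_closed P -> forall a, Grd Ar Att a -> P a.
Proof.
move=> closedP a Ga; have [[_ _ _ closedG] minG] := Grd_grounded.
have [lfp_complete _] := grounded_lfp_grounded.
have lfpG x : grounded_lfp x -> Grd Ar Att x by apply; exact: closedG.
exact: (minG _ lfp_complete lfpG a Ga P closedP).
Qed.

Lemma Grd_ind_strong (P : arg L -> Prop) :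
  (forall a, Ar a -> defends Ar Att (fun x => Grd Ar Att x /\ P x) a -> P a) ->
  forall a, Grd Ar Att a -> P a.
Proof.
move=> closedP a Ga; suff [] : Grd Ar Att a /\ P a by [].
apply: (Grd_ind (fun x => Grd Ar Att x /\ P x)) Ga => x Arx dx.
split; last exact: closedP.
have [_ _ _ closedG] := Grd_complete; apply: closedG => //.
by apply: defendsS dx => y [].
Qed.

End GroundedExtension.

Section AdditiveSetting.
Context {L : choiceType} {der : {fset L} -> L -> Prop} {bar : L -> L -> Prop}
  {hat : {fset L} -> {fset L}} {S : L -> Prop}.
Hypothesis hatU : forall G D, hat (G `|` D) = hat G `|` hat D.

Local Notation Att := (attacks bar hat).
Local Notation Ar := (Args der S).

Definition cut_arg (a b : arg L) : arg L := (a.1 `|` b.1, b.2).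

Lemma attacks_cut_arg c a b : Att c (cut_arg a b) <-> Att c a \/ Att c b.
Proof.
rewrite /attacks /= hatU; split.
- by case=> f; rewrite in_fsetU => /orP[] hf bf; [left | right]; exists f.
- by case=> -[f hf bf]; exists f => //; rewrite in_fsetU hf ?orbT.
Qed.

Lemma attacks_conclusion c c' b : c.2 = c'.2 -> Att c b -> Att c' b.
Proof. by rewrite /attacks => ->. Qed.

Lemma Grd_of_cut_arg a b : Ar b -> Grd Ar Att (cut_arg a b) -> Grd Ar Att b.
Proof.
move=> Arb Gab; have [_ _ defG closedG] := Grd_complete Ar Att.
apply: closedG => // d Ard Adb.
by apply: (defG _ Gab d Ard); apply/attacks_cut_arg; right.
Qed.

Section Cumulativity.
Context {phi : L}.
Hypothesis derCut :
  forall psi G D g, der G psi -> plus_der der psi D g -> der (G `|` D) g.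
Context {a0 : arg L}.
Hypotheses (Ga0 : Grd Ar Att a0) (a0phi : a0.2 = phi).

Local Notation Arp := (Args (plus_der der phi) S).

Lemma Args_plus_der b : Ar b -> Arp b.
Proof. by case=> Sb derb; split=> //; exact: pd_base. Qed.

Lemma Args_cut_arg b : Arp b -> Ar (cut_arg a0 b).
Proof.
have [ArG _ _ _] := Grd_complete Ar Att; have [Sa0 dera0] := ArG a0 Ga0.
case=> Sb derb; split; last by apply: (derCut phi) derb; rewrite -a0phi.
by move=> x /=; rewrite in_fsetU => /orP[]; [exact: Sa0 | exact: Sb].
Qed.

Lemma Grd_sub_Grd_plus_der a : Grd Ar Att a -> Grd Arp Att a.
Proof.
have [_ cfG _ _] := Grd_complete Ar Att.
have [_ _ _ closedGp] := Grd_complete Arp Att.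
apply: Grd_ind_strong => x Arx dx; apply: closedGp; first exact: Args_plus_der.
move=> b Arpb Abx.
have Abx' : Att (cut_arg a0 b) x by apply: attacks_conclusion Abx.
have [c [Gc Gpc]] := dx _ (Args_cut_arg _ Arpb) Abx'.
case/attacks_cut_arg=> [Aca0 | Acb].
  by case: (cfG c a0 Gc Ga0 Aca0).
by exists c.
Qed.

Lemma Grd_plus_der_cut_arg b : Grd Arp Att b -> Grd Ar Att (cut_arg a0 b).
Proof.
have [_ _ defG closedG] := Grd_complete Ar Att.
apply: (Grd_ind Arp Att (fun x => Grd Ar Att (cut_arg a0 x))) => x Arpx dx.
apply: closedG; first exact: Args_cut_arg.
move=> d Ard /attacks_cut_arg[Ada0 | Adx]; first exact: defG Ga0 d Ard Ada0.
have [c Gc Acd] := dx d (Args_plus_der _ Ard) Adx.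
by exists (cut_arg a0 c) => //; apply: attacks_conclusion Acd.
Qed.

End Cumulativity.
End AdditiveSetting.

Theorem theorem2 (L : choiceType) (der : {fset L} -> L -> Prop)
  (bar : L -> L -> Prop) (hat : {fset L} -> {fset L})
  (hat0 : hat fset0 = fset0) (Hpointed : pointed der hat)
  (S : L -> Prop) (phi : L) :
  grd_cons der bar hat S phi ->
  (forall psi : L,
     grd_cons (plus_der der phi) bar hat S psi <-> grd_cons der bar hat S psi) /\
  (forall a : arg L,
     Grd (Args der S) (attacks bar hat) a <->
     (Grd (Args (plus_der der phi) S) (attacks bar hat) a /\ Args der S a)).
Proof.
move=> [a0 [Ga0 a0phi]]; have [hatU derCut] := Hpointed.
have GGp := Grd_sub_Grd_plus_der hatU derCut Ga0 a0phi.
have GpG := Grd_plus_der_cut_arg hatU derCut Ga0 a0phi.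
have [ArG _ _ _] := Grd_complete (Args der S) (attacks bar hat).
split=> [psi | a]; split.
- by case=> b [Gpb <-]; exists (cut_arg a0 b); split; first exact: GpG.
- by case=> b [Gb <-]; exists b; split; first exact: GGp.
- by move=> Ga; split; [exact: GGp | exact: ArG].
- by case=> Gpa Ara; exact: Grd_of_cut_arg hatU a0 a Ara (GpG _ Gpa).
Qed.
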